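(* Let $G$ be a finite simple connected graph and let $C$ be a circuit of the toric ideal $I_G$ (i.e. $C\in\mathcal{C}_{A_G}$). Then $\operatorname{index}(C)=1$; consequently the true degree of $C$ equals its degree: $\operatorname{true\,deg}(C)=\deg(C)$.
   Context: Let $G$ be a finite simple connected graph with vertices $v_1,\dots,v_n$ and edges $e_1,\dots,e_m$. To each edge $e=\{v_i,v_j\}$ associate $a_e=\mathbf{v}_i+\mathbf{v}_j\in\mathbb{Z}^n$, where $\mathbf{v}_k$ denotes the $k$-th standard basis vector. Let $A_G=\{a_e : e\in E(G)\}$. For a finite set $A=\{\mathbf a_1,\dots,\mathbf a_m\}\subseteq\mathbb{N}^n$, the toric ideal $I_A\subseteq\mathbb{K}[x_1,\dots,x_m]$ ($\mathbb{K}$ a field) is the ideal generated by all binomials $\mathbf{x}^{\mathbf u}-\mathbf{x}^{\mathbf v}$ with $\mathbf u,\mathbf v\in\mathbb{N}^m$ and $\sum u_i\mathbf a_i=\sum v_i\mathbf a_i$; $I_G:=I_{A_G}$ in the polynomial ring $\mathbb{K}[e_1,\dots,e_m]$. A circuit of $I_A$ is an irreducible binomial $\mathbf{x}^{\mathbf u}-\mathbf{x}^{\mathbf v}\in I_A$ whose support (set of variables appearing) is minimal with respect to inclusion among nonzero binomials of $I_A$; $\mathcal{C}_A$ denotes the set of circuits. The support $\operatorname{supp}(C)$ of a circuit is regarded as the subset $\{\mathbf a_i : x_i \text{ appears in } C\}\subseteq A$. The index of $C$ is the (finite) index $\operatorname{index}(C)=[\,\mathbb{R}\operatorname{supp}(C)\cap\mathbb{Z}A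 : \mathbb{Z}\operatorname{supp}(C)\,]$, where $\mathbb{Z}A$ is the lattice generated by $A$. The degree of a binomial $\mathbf{x}^{\mathbf u}-\mathbf{x}^{\mathbf v}$ is the usual total degree (for $I_G$ all such binomials are homogeneous, so $\deg \mathbf{x}^{\mathbf u}=\deg\mathbf{x}^{\mathbf v}$). The true degree of a circuit $C$ is $\operatorname{true\,deg}(C)=\deg(C)\cdot\operatorname{index}(C)$. *)

From HB Require Import structures.
From mathcomp Require Import all_boot all_order all_algebra.
Set Implicit Arguments. Unset Strict Implicit. Unset Printing Implicit Defensive.
Import Order.TTheory GRing.Theory Num.Theory.
Local Open Scope ring_scope.

(* A graph with vertices 'I_n and edges 'I_m; edge e has endpoints ends e. *)
Definition graph_ends (n m : nat) := 'I_m -> 'I_n * 'I_n.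

Definition simple_graph n m (ends : graph_ends n m) : Prop :=
  (forall e, (ends e).1 != (ends e).2) /\
  (forall e f, [set (ends e).1; (ends e).2] = [set (ends f).1; (ends f).2] -> e = f).

Definition adj n m (ends : graph_ends n m) : rel 'I_n :=
  fun x y => [exists e : 'I_m,
    (((ends e).1 == x) && ((ends e).2 == y)) || (((ends e).1 == y) && ((ends e).2 == x))].

Definition connected_graph n m (ends : graph_ends n m) : Prop :=
  forall x y : 'I_n, connect (adj ends) x y.

Definition avec n m (ends : graph_ends n m) (e : 'I_m) (k : 'I_n) : int :=
  ((k == (ends e).1)%:R + (k == (ends e).2)%:R).

(* Binomials x^u - x^v of K[e_1..e_m] are encoded by their exponent vectors (u, v). *)
Definition in_toric n m (ends : graph_ends n m) (u v : {ffun 'I_m -> nat}) : Prop :=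
  forall k : 'I_n, \sum_(e < m) (u e)%:R * avec ends e k = \sum_(e < m) (v e)%:R * avec ends e k.

Definition nonzero_binom m (u v : {ffun 'I_m -> nat}) : Prop := u != v.

Definition bsupp m (u v : {ffun 'I_m -> nat}) : {set 'I_m} :=
  [set e | (u e != 0%N) || (v e != 0%N)].

Definition bgcd m (u v : {ffun 'I_m -> nat}) : nat :=
  \big[gcdn/0%N]_(e < m) gcdn (u e) (v e).

Definition irreducible_binom m (u v : {ffun 'I_m -> nat}) : Prop :=
  nonzero_binom u v /\ (forall e, (u e == 0%N) || (v e == 0%N)) /\ bgcd u v = 1%N.

Definition is_circuit n m (ends : graph_ends n m) (u v : {ffun 'I_m -> nat}) : Prop :=
  irreducible_binom u v /\ in_toric ends u v /\
  (forall u' v' : {ffun 'I_m -> nat}, nonzero_binom u' v' -> in_toric ends u' v' ->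
     bsupp u' v' \subset bsupp u v -> bsupp u' v' = bsupp u v).

Definition bdeg m (u v : {ffun 'I_m -> nat}) : nat :=
  maxn (\sum_(e < m) u e) (\sum_(e < m) v e).

Definition in_ZA n m (ends : graph_ends n m) (x : 'I_n -> int) : Prop :=
  exists c : 'I_m -> int, forall k, x k = \sum_(e < m) c e * avec ends e k.

Definition in_Zspan n m (ends : graph_ends n m) (S : {set 'I_m}) (x : 'I_n -> int) : Prop :=
  exists c : 'I_m -> int, (forall e, e \notin S -> c e = 0) /\
    forall k, x k = \sum_(e < m) c e * avec ends e k.

Definition in_Rspan (R : realFieldType) n m (ends : graph_ends n m) (S : {set 'I_m})
    (x : 'I_n -> int) : Prop :=
  exists c : 'I_m -> R, (forall e, e \notin S -> c e = 0) /\
    forall k, (x k)%:~R = \sum_(e < m) c e * (avec ends e k)%:~R.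

(* index [R S ∩ ZA : Z S] = k : there are exactly k cosets *)
Definition lattice_index_is (R : realFieldType) n m (ends : graph_ends n m)
    (S : {set 'I_m}) (k : nat) : Prop :=
  let L1 := fun x => in_ZA ends x /\ in_Rspan R ends S x in
  exists y : 'I_k -> ('I_n -> int),
    (forall i, L1 (y i)) /\
    (forall i j, i <> j -> ~ in_Zspan ends S (fun t => y i t - y j t)) /\
    (forall x, L1 x -> exists i, in_Zspan ends S (fun t => x t - y i t)).

Definition circuit_index_is (R : realFieldType) n m (ends : graph_ends n m)
    (u v : {ffun 'I_m -> nat}) (k : nat) : Prop :=
  lattice_index_is R ends (bsupp u v) k.

Definition true_deg_is (R : realFieldType) n m (ends : graph_ends n m)
    (u v : {ffun 'I_m -> nat}) (d : nat) : Prop :=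
  exists k, circuit_index_is R ends u v k /\ d = (bdeg u v * k)%N.

From HB Require Import structures.
From mathcomp Require Import all_boot all_order all_algebra.
From mathcomp Require Import ring.
From Stdlib Require Import ClassicalEpsilon.
Set Implicit Arguments. Unset Strict Implicit. Unset Printing Implicit Defensive.
Import Order.TTheory GRing.Theory Num.Theory.
Local Open Scope ring_scope.

(* Let S be the support of a circuit and x a point of ZA lying in the real span of
   S; we show x is in Z S.  Fix a vertex r of an edge of S.  Since a_e = δ_a + δ_b
   for e = {a, b}, along every edge of S the congruences δ_a ≡ δ_r and δ_a ≡ -δ_r
   (mod Z S) alternate, so the set of vertices satisfying one of them is closed
   under S-edges.  Minimality of the circuit forces S to be connected in the sense
   that such a closed set containing one edge of S contains all of them; hence
   every vertex met by S, in particular every vertex in the support of x, is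
   congruent to ±δ_r.  This writes x ≡ c δ_r, and c δ_r lies in Z S: if some vertex
   is congruent to both δ_r and -δ_r then 2 δ_r ∈ Z S and c is even because the
   coordinate sum of any point of ZA is; otherwise the two classes form a
   bipartition of S and c is the value at x of a linear form vanishing on S. *)

Definition asbool (P : Prop) : bool :=
  if excluded_middle_informative P then true else false.

Lemma asboolP (P : Prop) : reflect P (asbool P).
Proof. by rewrite /asbool; case: excluded_middle_informative => h; constructor. Qed.

Definition delta n (a : 'I_n) : 'I_n -> int := fun k => (k == a)%:R.

Lemma sum_mul_delta n (s : 'I_n -> int) a : \sum_k s k * delta a k = s a.
Proof.
rewrite (bigD1 a) //= /delta eqxx mulr1 big1 ?addr0 // => k /negbTE ->.
by rewrite mulr0.
Qed.

Lemma delta_decomp n (x : 'I_n -> int) t : x t = \sum_k x k * delta k t.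
Proof.
rewrite (bigD1 t) //= /delta eqxx mulr1 big1 ?addr0 // => k hk.
by rewrite eq_sym (negbTE hk) mulr0.
Qed.

Section Spans.

Variables (n m : nat) (ends : graph_ends n m).
Implicit Types (S : {set 'I_m}) (x y : 'I_n -> int).

Lemma sum_mul_avec (s : 'I_n -> int) e :
  \sum_k s k * avec ends e k = s (ends e).1 + s (ends e).2.
Proof.
rewrite -!(sum_mul_delta s) -big_split /=.
by apply: eq_bigr => k _; rewrite -mulrDr.
Qed.

Lemma in_Zspan_ext S x y : x =1 y -> in_Zspan ends S x -> in_Zspan ends S y.
Proof. by move=> exy [c [hc hx]]; exists c; split=> // k; rewrite -exy. Qed.

Lemma in_Zspan0 S : in_Zspan ends S (fun=> 0).
Proof. by exists (fun=> 0); split=> // k; rewrite big1 // => e _; rewrite mul0r. Qed.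

Lemma in_ZspanD S x y :
  in_Zspan ends S x -> in_Zspan ends S y -> in_Zspan ends S (fun k => x k + y k).
Proof.
move=> [c [hc hx]] [d [hd hy]]; exists (fun e => c e + d e); split.
  by move=> e he; rewrite hc ?hd ?addr0.
by move=> k; rewrite hx hy -big_split; apply: eq_bigr => e _; rewrite mulrDl.
Qed.

Lemma in_ZspanZ S (z : int) x :
  in_Zspan ends S x -> in_Zspan ends S (fun k => z * x k).
Proof.
move=> [c [hc hx]]; exists (fun e => z * c e); split.
  by move=> e he; rewrite hc ?mulr0.
by move=> k; rewrite hx big_distrr /=; apply: eq_bigr => e _; rewrite mulrA.
Qed.

Lemma in_ZspanB S x y :
  in_Zspan ends S x -> in_Zspan ends S y -> in_Zspan ends S (fun k => x k - y k).
Proof.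
by move=> hx hy; apply: in_Zspan_ext (in_ZspanD hx (in_ZspanZ (-1) hy)) => k; rewrite mulN1r.
Qed.

Lemma in_Zspan_sum S (I : finType) (F : I -> 'I_n -> int) :
  (forall i, in_Zspan ends S (F i)) -> in_Zspan ends S (fun t => \sum_i F i t).
Proof.
move=> hF; rewrite unlock; elim: (index_enum I) => [|i s IHs] /=.
  exact: in_Zspan0.
exact: in_ZspanD.
Qed.

Lemma in_Zspan_avec S e : e \in S -> in_Zspan ends S (avec ends e).
Proof.
move=> eS; exists (fun f => (f == e)%:R); split.
  by move=> f; apply: contraNeq => /eqP; case: eqP => // ->.
move=> k; rewrite (bigD1 e) //= eqxx mul1r big1 ?addr0 // => f /negbTE ->.
by rewrite mul0r.
Qed.

(* Every edge vector has coordinate sum 2. *)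
Lemma in_ZA_sum_even x : in_ZA ends x -> exists D : int, \sum_k x k = 2 * D.
Proof.
move=> [c hx]; exists (\sum_e c e).
rewrite (eq_bigr _ (fun k _ => hx k)) exchange_big mulr_sumr; apply: eq_bigr => e _.
rewrite -mulr_sumr (eq_bigr (fun k => 1 * avec ends e k)) ?sum_mul_avec /=.
  by rewrite mulrC.
by move=> k _; rewrite mul1r.
Qed.

Lemma in_Rspan_weight_eq0 (R : realFieldType) S x (s : 'I_n -> int) :
  in_Rspan R ends S x -> (forall e, e \in S -> s (ends e).1 + s (ends e).2 = 0) ->
  \sum_k s k * x k = 0.
Proof.
move=> [c [hc hx]] hs; apply/eqP; rewrite -(intr_eq0 R) rmorph_sum /=.
under eq_bigr do rewrite rmorphM /= hx mulr_sumr.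
rewrite exchange_big big1 // => e _.
have [eS | eNS] := boolP (e \in S); last first.
  by rewrite big1 // => k _; rewrite hc // mul0r mulr0.
have -> : \sum_k (s k)%:~R * (c e * (avec ends e k)%:~R) =
          c e * ((\sum_k s k * avec ends e k)%:~R : R).
  by rewrite rmorph_sum mulr_sumr; apply: eq_bigr => k _; rewrite rmorphM /=; ring.
by rewrite sum_mul_avec hs // mulr0.
Qed.

Lemma in_Rspan_supp (R : realFieldType) S x k :
  in_Rspan R ends S x -> x k != 0 ->
  exists2 e, e \in S & (k == (ends e).1) || (k == (ends e).2).
Proof.
move=> hx xk; have [//|noedge] := classic (exists2 e, e \in S &
  (k == (ends e).1) || (k == (ends e).2)).
case/negP: xk; apply/eqP.
rewrite -(sum_mul_delta x k); under eq_bigr do rewrite mulrC.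
apply: (in_Rspan_weight_eq0 hx) => e eS; rewrite /delta.
case: eqP => [e1|_]; first by case: noedge; exists e; rewrite // e1 eqxx.
case: eqP => [e2|//]; by case: noedge; exists e; rewrite // e2 eqxx orbT.
Qed.

(* Pivoting at r: x = Σ_k x_k (δ_k - s_k δ_r) + (Σ_k s_k x_k) δ_r. *)
Lemma in_Zspan_pivot S x r (s : 'I_n -> int) :
  (forall k, x k != 0 -> in_Zspan ends S (fun t => delta k t - s k * delta r t)) ->
  in_Zspan ends S (fun t => (\sum_k s k * x k) * delta r t) ->
  in_Zspan ends S x.
Proof.
move=> hk hr.
have hsum : in_Zspan ends S (fun t => \sum_k x k * (delta k t - s k * delta r t)).
  apply: in_Zspan_sum => k; have [-> | xk] := eqVneq (x k) 0.
    by apply: in_Zspan_ext (in_Zspan0 S) => t; rewrite mul0r.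
  exact: in_ZspanZ (hk k xk).
apply: in_Zspan_ext (in_ZspanD hsum hr) => t.
rewrite [RHS]delta_decomp mulr_suml -big_split; apply: eq_bigr => k _ /=; ring.
Qed.

End Spans.

Section PivotClasses.

Variables (n m : nat) (ends : graph_ends n m) (S : {set 'I_m}) (r : 'I_n).

Definition same_class a := in_Zspan ends S (fun t => delta a t - delta r t).
Definition opp_class a := in_Zspan ends S (fun t => delta a t + delta r t).
Definition in_class a := asbool (same_class a \/ opp_class a).
Definition class_sign a : int := if asbool (same_class a) then 1 else -1.

Lemma same_class_pivot : same_class r.
Proof. by apply: in_Zspan_ext (in_Zspan0 ends S) => t; rewrite subrr. Qed.

Lemma same_opp_class a b :
  in_Zspan ends S (fun t => delta a t + delta b t) -> same_class a -> opp_class b.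
Proof. by move=> hab ha; apply: in_Zspan_ext (in_ZspanB hab ha) => t; ring. Qed.

Lemma opp_same_class a b :
  in_Zspan ends S (fun t => delta a t + delta b t) -> opp_class a -> same_class b.
Proof. by move=> hab ha; apply: in_Zspan_ext (in_ZspanB hab ha) => t; ring. Qed.

Lemma in_class_edge e : e \in S -> in_class (ends e).1 = in_class (ends e).2.
Proof.
move=> eS; have e12 := in_Zspan_avec ends eS.
have e21 : in_Zspan ends S (fun t => delta (ends e).2 t + delta (ends e).1 t).
  by apply: in_Zspan_ext e12 => t; rewrite addrC.
by apply/asboolP/asboolP => -[h|h];
  [right; apply: same_opp_class e12 h | left; apply: opp_same_class e12 h
  |right; apply: same_opp_class e21 h | left; apply: opp_same_class e21 h].
Qed.

Lemma in_Zspan_class_sign k :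
  in_class k -> in_Zspan ends S (fun t => delta k t - class_sign k * delta r t).
Proof.
rewrite /class_sign => /asboolP kcl; case: asboolP => [same | notsame].
  by apply: in_Zspan_ext same => t; rewrite mul1r.
case: kcl => // opp; apply: in_Zspan_ext opp => t; ring.
Qed.

Lemma class_sign_edge e :
  e \in S -> in_class (ends e).1 -> ~ (exists a, same_class a /\ opp_class a) ->
  class_sign (ends e).1 + class_sign (ends e).2 = 0.
Proof.
move=> eS e1cl noboth; have e12 := in_Zspan_avec ends eS.
have e2cl : in_class (ends e).2 by rewrite -in_class_edge.
rewrite /class_sign; case: asboolP => [same1 | nsame1]; case: asboolP => [same2 | nsame2].
- by case: noboth; exists (ends e).2; split=> //; apply: same_opp_class e12 same1.
- by rewrite subrr.
- by rewrite addrC subrr.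
- by case/asboolP: e1cl => // opp1; case: nsame2; apply: opp_same_class e12 opp1.
Qed.

Lemma in_Zspan_class_coef (R : realFieldType) x :
  in_ZA ends x -> in_Rspan R ends S x ->
  (forall e, e \in S -> in_class (ends e).1) ->
  in_Zspan ends S (fun t => (\sum_k class_sign k * x k) * delta r t).
Proof.
move=> xZA xR Scl.
have [[a [same opp]] | noboth] := classic (exists a, same_class a /\ opp_class a).
  have r2 : in_Zspan ends S (fun t => 2 * delta r t).
    by apply: in_Zspan_ext (in_ZspanB opp same) => t; ring.
  have [D sumx] := in_ZA_sum_even xZA.
  pose odds := \sum_k (~~ asbool (same_class k))%:R * x k.
  have -> : \sum_k class_sign k * x k = 2 * (D - odds).
    rewrite mulrBr -sumx mulr_sumr -sumrB; apply: eq_bigr => k _.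
    by rewrite /class_sign; case: asbool => /=; ring.
  by apply: in_Zspan_ext (in_ZspanZ (D - odds) r2) => t; ring.
rewrite (in_Rspan_weight_eq0 xR) => [|e eS]; last first.
  exact: class_sign_edge eS (Scl e eS) noboth.
by apply: in_Zspan_ext (in_Zspan0 ends S) => t; rewrite mul0r.
Qed.

Lemma in_Zspan_of_classes (R : realFieldType) x :
  in_ZA ends x -> in_Rspan R ends S x ->
  (forall e, e \in S -> in_class (ends e).1) -> in_Zspan ends S x.
Proof.
move=> xZA xR Scl; apply: (in_Zspan_pivot (s := class_sign)).
  move=> k /(in_Rspan_supp xR) [e eS /orP[] /eqP->]; apply: in_Zspan_class_sign.
    exact: Scl.
  by rewrite -in_class_edge ?Scl.
exact: in_Zspan_class_coef xZA xR Scl.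
Qed.

End PivotClasses.

Section CircuitSupport.

Variables (n m : nat) (ends : graph_ends n m).

Definition restrict_binom (X : pred 'I_n) (w : {ffun 'I_m -> nat}) :
  {ffun 'I_m -> nat} := [ffun f => if X (ends f).1 then w f else 0%N].

Lemma sum_restrict_binom (X : pred 'I_n) (w : {ffun 'I_m -> nat}) k :
  (forall f, w f != 0%N -> X (ends f).1 = X (ends f).2) ->
  \sum_f ((restrict_binom X w f)%:R * avec ends f k : int) =
  if X k then \sum_f (w f)%:R * avec ends f k else 0.
Proof.
move=> wcl.
have termwise f : ((restrict_binom X w f)%:R * avec ends f k : int) =
                  if X k then (w f)%:R * avec ends f k else 0.
  rewrite ffunE; have [-> | wf] := eqVneq (w f) 0%N; first by rewrite if_same !mul0r if_same.
  case: (boolP ((k == (ends f).1) || (k == (ends f).2))) => [/orP[]/eqP-> | kNf].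
  - by case: ifP; rewrite ?mul0r.
  - by rewrite -wcl //; case: ifP; rewrite ?mul0r.
  have -> : avec ends f k = 0.
    by move: kNf; rewrite negb_or /avec => /andP[/negbTE-> /negbTE->].
  by rewrite !mulr0; case: ifP.
rewrite (eq_bigr _ (fun f _ => termwise f)); case: (X k) => //.
by rewrite big1.
Qed.

Lemma in_toric_restrict (X : pred 'I_n) (u v : {ffun 'I_m -> nat}) :
  in_toric ends u v ->
  (forall e, e \in bsupp u v -> X (ends e).1 = X (ends e).2) ->
  in_toric ends (restrict_binom X u) (restrict_binom X v).
Proof.
move=> uv Xcl k; rewrite !sum_restrict_binom ?uv // => f wf; apply: Xcl;
  by rewrite inE wf ?orbT.
Qed.

(* A vertex set closed along the support of a circuit and meeting it contains all
   of it: otherwise restricting the circuit to that set gives a binomial of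
   strictly smaller support. *)
Lemma circuit_supp_closed (u v : {ffun 'I_m -> nat}) (X : pred 'I_n) :
  is_circuit ends u v ->
  (forall e, e \in bsupp u v -> X (ends e).1 = X (ends e).2) ->
  (exists2 e, e \in bsupp u v & X (ends e).1) ->
  forall e, e \in bsupp u v -> X (ends e).1.
Proof.
move=> [[_ [disj _]] [uv minimal]] Xcl [e0 e0S Xe0] e eS.
have nz : nonzero_binom (restrict_binom X u) (restrict_binom X v).
  have : u e0 != v e0.
    by move: e0S; rewrite inE; case/orP: (disj e0) => /eqP->; rewrite eqxx /= ?orbF // eq_sym.
  by apply: contraNneq => /ffunP/(_ e0); rewrite !ffunE Xe0 => /eqP.
have sub : bsupp (restrict_binom X u) (restrict_binom X v) \subset bsupp u v.
  by apply/subsetP => f; rewrite !inE !ffunE; case: ifP.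
move: eS; rewrite -(minimal _ _ nz (in_toric_restrict uv Xcl) sub) inE !ffunE.
by case: ifP.
Qed.

Lemma circuit_lattice_saturated (R : realFieldType) (u v : {ffun 'I_m -> nat}) x :
  is_circuit ends u v -> in_ZA ends x -> in_Rspan R ends (bsupp u v) x ->
  in_Zspan ends (bsupp u v) x.
Proof.
move=> circ xZA xR; have [[uv_neq _] _] := circ.
have [e0 e0S] : exists e0, e0 \in bsupp u v.
  apply/existsP; apply: contraNT uv_neq => /existsPn noS; apply/eqP/ffunP => e.
  by move: (noS e); rewrite inE negb_or !negbK => /andP[/eqP-> /eqP->].
apply: (in_Zspan_of_classes (r := (ends e0).1) xZA xR).
apply: circuit_supp_closed circ _ _ => [e|]; first exact: in_class_edge.
exists e0 => //; apply/asboolP; left; exact: same_class_pivot.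
Qed.

End CircuitSupport.

Section LatticeIndex.

Variables (R : realFieldType) (n m : nat) (ends : graph_ends n m) (S : {set 'I_m}).

Hypothesis saturated :
  forall x, in_ZA ends x -> in_Rspan R ends S x -> in_Zspan ends S x.

Lemma in_ZA_Rspan0 : in_ZA ends (fun=> 0) /\ in_Rspan R ends S (fun=> 0).
Proof.
split; first by exists (fun=> 0) => k; rewrite big1 // => e _; rewrite mul0r.
by exists (fun=> 0); split=> // k; rewrite big1 ?mulr0z // => e _; rewrite mul0r.
Qed.

Lemma lattice_index_one : lattice_index_is R ends S 1.
Proof.
exists (fun _ _ => 0); split; [|split].
- by move=> _; exact: in_ZA_Rspan0.
- by move=> i j; rewrite (ord1 i) (ord1 j).
- move=> x [xZA xR]; exists ord0.
  by apply: in_Zspan_ext (saturated xZA xR) => t; rewrite subr0.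
Qed.

Lemma lattice_index_uniq k : lattice_index_is R ends S k -> k = 1%N.
Proof.
case=> y [yL [ydistinct ycover]].
case: k y yL ydistinct ycover => [|[|k]] y yL ydistinct ycover //.
  by have [i _] := ycover _ in_ZA_Rspan0; case: i.
pose i1 : 'I_k.+2 := Ordinal (isT : (1 < k.+2)%N).
have [y0ZA y0R] := yL ord0; have [y1ZA y1R] := yL i1.
exfalso; apply: (ydistinct ord0 i1); first by move/(congr1 val).
exact: in_ZspanB (saturated y0ZA y0R) (saturated y1ZA y1R).
Qed.

End LatticeIndex.

Local Close Scope ring_scope.

Theorem theorem3p1 (R : realFieldType) (n m : nat) (ends : graph_ends n m)
  (Hsimple : simple_graph ends) (Hconn : connected_graph ends)
  (u v : {ffun 'I_m -> nat}) (HC : is_circuit ends u v) :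
  circuit_index_is R ends u v 1 /\
  (forall d, true_deg_is R ends u v d -> d = bdeg u v).
Proof.
have saturated := fun x => @circuit_lattice_saturated n m ends R u v x HC.
split; first exact: lattice_index_one.
move=> d [k [hk ->]].
by rewrite (lattice_index_uniq saturated hk) muln1.
Qed.
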